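(* Let $a,b,c\in\mathbf S^2$ be the corners of a spherical triangle $\Delta(abc)$ whose sides $\overline{bc}$ and $\overline{ca}$ have length less than $\pi$, and let $\alpha,\beta,\gamma$ be the midpoints of the sides $\overline{bc},\overline{ca},\overline{ab}$ respectively. Then $$\operatorname{sign}\langle\alpha,\gamma\rangle_E=\operatorname{sign}\langle\beta,\gamma\rangle_E=\operatorname{sign}\big(\langle b,\gamma\rangle_E+\langle c,\gamma\rangle_E\big)\qquad(\operatorname{sign}\in\{-1,0,1\}),$$ and if $\langle\alpha,\gamma\rangle_E=\langle\beta,\gamma\rangle_E=0$ then also $\langle\alpha,\beta\rangle_E=0$.
   Context: $\mathbf S^2\subset\mathbf R^3$ is the unit sphere with Euclidean inner product $\langle\cdot,\cdot\rangle_E$. A spherical (geodesic) triangle $\Delta(abc)$ consists of three points $a,b,c\in\mathbf S^2$ together with, for each pair of corners, a choice of one of the great-circle arcs joining them (its sides $\overline{bc},\overline{ca},\overline{ab}$), such that at most one side has length $\ge\pi$. The midpoint of a side is the point on that arc at equal arc-length distance from its two endpoints. *)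

From Stdlib Require Import Reals Lra.
Open Scope R_scope.

Record vec3 := V3 { vx : R; vy : R; vz : R }.

Definition dot (p q : vec3) : R := vx p * vx q + vy p * vy q + vz p * vz q.
Definition vadd (p q : vec3) : vec3 := V3 (vx p + vx q) (vy p + vy q) (vz p + vz q).
Definition vscale (k : R) (p : vec3) : vec3 := V3 (k * vx p) (k * vy p) (k * vz p).

Definition on_sphere (p : vec3) : Prop := dot p p = 1.

(* A great-circle arc, given by its starting point, a unit tangent direction
   orthogonal to the starting point, and its (arc-)length; it is the curve
   t |-> cos t * start + sin t * dir, t in [0, len]. *)
Record arc := Arc { arc_start : vec3; arc_dir : vec3; arc_len : R }.

Definition arc_point (g : arc) (t : R) : vec3 :=
  vadd (vscale (cos t) (arc_start g)) (vscale (sin t) (arc_dir g)).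

Definition arc_joins (g : arc) (p q : vec3) : Prop :=
  on_sphere p /\ arc_start g = p /\
  on_sphere (arc_dir g) /\ dot p (arc_dir g) = 0 /\
  0 <= arc_len g <= 2 * PI /\
  arc_point g (arc_len g) = q.

Definition arc_midpoint (g : arc) : vec3 := arc_point g (arc_len g / 2).

Definition spherical_triangle (a b c : vec3) (sbc sca sab : arc) : Prop :=
  on_sphere a /\ on_sphere b /\ on_sphere c /\
  arc_joins sbc b c /\ arc_joins sca c a /\ arc_joins sab a b /\
  (PI <= arc_len sbc -> arc_len sca < PI /\ arc_len sab < PI) /\
  (PI <= arc_len sca -> arc_len sbc < PI /\ arc_len sab < PI) /\
  (PI <= arc_len sab -> arc_len sbc < PI /\ arc_len sca < PI).

Definition sign (x : R) : Z :=
  match Rlt_dec 0 x with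
  | left _ => 1%Z
  | right _ => match Rlt_dec x 0 with left _ => (-1)%Z | right _ => 0%Z end
  end.

From Stdlib Require Import Reals Lra.
Open Scope R_scope.

(* Parametrise a great-circle arc g from p to q of length L by
   P(t) = cos t * p + sin t * d with p, d orthonormal; then
   <P(t), P(s)> = cos (t - s).  Two consequences drive everything:
   (1) the endpoints sum to a multiple of the midpoint m,
       p + q = 2 cos(L/2) * m   (sum-to-product formulas), and
   (2) <p, m> = <q, m> = cos(L/2) and <p, q> = cos L.
   For the sides bc and ca, of length < PI, the factor 2 cos(L/2) is
   positive, so alpha and beta are positive multiples of b + c and c + a.
   Since <a, gamma> = <b, gamma> by (2), the numbers <alpha,gamma>,
   <beta,gamma> and <b,gamma> + <c,gamma> are positive multiples of one
   another, which gives the equality of signs.  If <alpha,gamma> = 0 then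
   <c,gamma> = -cos(L/2) for L = |ab|, and a direct computation with (1)
   and (2) shows <b + c, c + a> = 0, i.e. <alpha, beta> = 0. *)

Lemma dot_addl p q r : dot (vadd p q) r = dot p r + dot q r.
Proof. unfold dot; simpl; ring. Qed.

Lemma dot_addr p q r : dot r (vadd p q) = dot r p + dot r q.
Proof. unfold dot; simpl; ring. Qed.

Lemma dot_scalel k p r : dot (vscale k p) r = k * dot p r.
Proof. unfold dot; simpl; ring. Qed.

Lemma dot_scaler k p r : dot r (vscale k p) = k * dot r p.
Proof. unfold dot; simpl; ring. Qed.

Lemma dot_comm p q : dot p q = dot q p.
Proof. unfold dot; ring. Qed.

Lemma sign_scale_pos k x : 0 < k -> sign (k * x) = sign x.
Proof.
  intro Hk; unfold sign.
  destruct (Rlt_dec 0 (k * x)), (Rlt_dec 0 x); try reflexivity; try (exfalso; nra).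
  destruct (Rlt_dec (k * x) 0), (Rlt_dec x 0); try reflexivity; exfalso; nra.
Qed.

Lemma arc_point_0 g : arc_point g 0 = arc_start g.
Proof.
  destruct g as [[x y z] d L]; unfold arc_point, vadd, vscale; simpl.
  rewrite cos_0, sin_0; f_equal; ring.
Qed.

Lemma arc_point_dot g t s :
  on_sphere (arc_start g) -> on_sphere (arc_dir g) ->
  dot (arc_start g) (arc_dir g) = 0 ->
  dot (arc_point g t) (arc_point g s) = cos (t - s).
Proof.
  destruct g as [p d L]; unfold on_sphere, arc_point; simpl; intros Hp Hd Hpd.
  rewrite !dot_addl, !dot_addr, !dot_scalel, !dot_scaler, (dot_comm d p), Hp, Hd, Hpd.
  rewrite cos_minus; ring.
Qed.

Lemma arc_endpoint_sum g :
  vadd (arc_point g 0) (arc_point g (arc_len g)) =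
  vscale (2 * cos (arc_len g / 2)) (arc_midpoint g).
Proof.
  destruct g as [p d L]; unfold arc_midpoint, arc_point, vadd, vscale; simpl.
  assert (HL : L = 2 * (L / 2)) by field.
  revert HL; generalize (L / 2); intros h HL; rewrite HL.
  rewrite cos_0, sin_0, cos_2a_cos, sin_2a.
  replace (2 * h / 2) with h by field; f_equal; ring.
Qed.

Lemma half_cos_pos L : 0 <= L < PI -> 0 < 2 * cos (L / 2).
Proof.
  intros HL; pose proof PI_RGT_0.
  assert (0 < cos (L / 2)) by (apply cos_gt_0; lra); lra.
Qed.

Section ArcJoining.

Variables (g : arc) (p q : vec3).
Hypothesis Hg : arc_joins g p q.

Let L := arc_len g.
Let m := arc_midpoint g.

Lemma arc_sum : vadd p q = vscale (2 * cos (L / 2)) m.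
Proof.
  destruct Hg as [_ [Hs [_ [_ [_ Hq]]]]].
  rewrite <- Hq, <- Hs, <- (arc_point_0 g); apply arc_endpoint_sum.
Qed.

Lemma arc_dot_start_mid : dot p m = cos (L / 2).
Proof.
  destruct Hg as [Hp [Hs [Hd [Hpd _]]]]; subst p.
  unfold m, arc_midpoint; rewrite <- (arc_point_0 g), arc_point_dot by assumption.
  unfold L; rewrite Rminus_0_l, cos_neg; reflexivity.
Qed.

Lemma arc_dot_end_mid : dot q m = cos (L / 2).
Proof.
  destruct Hg as [Hp [Hs [Hd [Hpd [_ Hq]]]]]; subst p q.
  unfold m, arc_midpoint; rewrite arc_point_dot by assumption.
  unfold L; f_equal; field.
Qed.

Lemma arc_dot_endpoints : dot p q = cos L.
Proof.
  destruct Hg as [Hp [Hs [Hd [Hpd [_ Hq]]]]]; subst p q.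
  rewrite <- (arc_point_0 g), arc_point_dot by assumption.
  unfold L; rewrite Rminus_0_l, cos_neg; reflexivity.
Qed.

(* A unit vector c whose inner product with the midpoint is -cos(L/2)
   makes q + c orthogonal to c + p; this is the degenerate case of the
   theorem, with (p, q, c) = (a, b, c). *)
Lemma opposite_mid_orthogonal c :
  on_sphere c -> dot c m = - cos (L / 2) ->
  dot (vadd q c) (vadd c p) = 0.
Proof.
  intros Hc Hcm.
  assert (Hpq_c : dot p c + dot q c = - 2 * cos (L / 2) ^ 2).
  { rewrite <- dot_addl, arc_sum, dot_scalel, dot_comm, Hcm; ring. }
  assert (HL : cos L = 2 * cos (L / 2) ^ 2 - 1).
  { replace L with (2 * (L / 2)) at 1 by field; rewrite cos_2a_cos; ring. }
  unfold on_sphere in Hc.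
  rewrite !dot_addl, !dot_addr, (dot_comm c p), Hc, (dot_comm q p), arc_dot_endpoints.
  lra.
Qed.

End ArcJoining.

Theorem mainTheorem2 (a b c : vec3) (sbc sca sab : arc) :
  spherical_triangle a b c sbc sca sab ->
  arc_len sbc < PI -> arc_len sca < PI ->
  sign (dot (arc_midpoint sbc) (arc_midpoint sab))
    = sign (dot (arc_midpoint sca) (arc_midpoint sab)) /\
  sign (dot (arc_midpoint sca) (arc_midpoint sab))
    = sign (dot b (arc_midpoint sab) + dot c (arc_midpoint sab)) /\
  (dot (arc_midpoint sbc) (arc_midpoint sab) = 0 ->
   dot (arc_midpoint sca) (arc_midpoint sab) = 0 ->
   dot (arc_midpoint sbc) (arc_midpoint sca) = 0).
Proof.
  intros [_ [_ [Hc [Jbc [Jca [Jab _]]]]]] Hbc Hca.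
  pose proof (arc_sum _ _ _ Jbc) as Ebc; pose proof (arc_sum _ _ _ Jca) as Eca.
  pose proof (arc_dot_start_mid _ _ _ Jab) as Dag.
  pose proof (arc_dot_end_mid _ _ _ Jab) as Dbg.
  pose proof (opposite_mid_orthogonal _ _ _ Jab c Hc) as Orth.
  assert (K1 : 0 < 2 * cos (arc_len sbc / 2))
    by (apply half_cos_pos; destruct Jbc as [_ [_ [_ [_ [[] _]]]]]; lra).
  assert (K2 : 0 < 2 * cos (arc_len sca / 2))
    by (apply half_cos_pos; destruct Jca as [_ [_ [_ [_ [[] _]]]]]; lra).
  set (al := arc_midpoint sbc) in *; set (be := arc_midpoint sca) in *.
  set (ga := arc_midpoint sab) in *.
  set (k1 := 2 * cos (arc_len sbc / 2)) in *; set (k2 := 2 * cos (arc_len sca / 2)) in *.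
  (* alpha and beta are positive multiples of b + c and c + a,
     and <c + a, gamma> = <b + c, gamma> because <a, gamma> = <b, gamma> *)
  assert (F1 : dot b ga + dot c ga = k1 * dot al ga)
    by (rewrite <- dot_addl, Ebc, dot_scalel; reflexivity).
  assert (F2 : dot b ga + dot c ga = k2 * dot be ga)
    by (rewrite Dbg, <- Dag, Rplus_comm, <- dot_addl, Eca, dot_scalel; reflexivity).
  assert (G2 : sign (dot be ga) = sign (dot b ga + dot c ga))
    by (rewrite F2, sign_scale_pos; auto).
  split; [rewrite G2, F1, sign_scale_pos; auto | split; [exact G2 |]].
  intros Z1 _.
  assert (Hcg : dot c ga = - cos (arc_len sab / 2)) by (rewrite Z1 in F1; lra).
  specialize (Orth Hcg); rewrite Ebc, Eca, dot_scalel, dot_scaler in Orth.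
  apply (Rmult_eq_reg_l (k1 * k2)); nra.
Qed.
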